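(* Let $\Gamma=\{0=\rho_1<\rho_2<\cdots\}$ be an Arf numerical semigroup and $d_i=\rho_{i+1}-\rho_i$ for $i\ge1$. If $i\ge2$ and $d_i<d_{i-1}$, then \[ |\mathrm{Ap}(\Gamma,d_i)|=i-1+d_i. \]
   Context: A numerical semigroup is a subset of $\mathbb N$ containing $0$, closed under addition, with finite complement; its elements listed increasingly are $\rho_1<\rho_2<\cdots$. $\Gamma$ is Arf if $\rho_i+\rho_j-\rho_k\in\Gamma$ for all $i\ge j\ge k$. For $x\in\mathbb Z$, $\mathrm{Ap}(\Gamma,x)=\{s\in\Gamma: s-x\notin\Gamma\}$. *)

From mathcomp Require Import all_boot.
Set Implicit Arguments. Unset Strict Implicit. Unset Printing Implicit Defensive.

Definition numerical_semigroup (S : pred nat) : Prop :=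
  [/\ S 0,
      (forall a b, S a -> S b -> S (a + b)) &
      (exists N, forall n, N <= n -> S n)].

(* rho enumerates S increasingly, 1-indexed: S = {rho 1 < rho 2 < ...}.
   (The value rho 0 is irrelevant.) *)
Definition increasing_enum (S : pred nat) (rho : nat -> nat) : Prop :=
  [/\ (forall i, 1 <= i -> S (rho i)),
      (forall i, 1 <= i -> rho i < rho i.+1) &
      (forall s, S s -> exists2 i, 1 <= i & rho i = s)].

Definition Arf (S : pred nat) (rho : nat -> nat) : Prop :=
  forall i j k, 1 <= k -> k <= j -> j <= i -> S (rho i + rho j - rho k).

(* Apery set Ap(S, x) = {s in S : s - x notin S}, for x : nat; since S is a
   subset of N, an integer s - x < 0 is never in S. *)
Definition Ap (S : pred nat) (x : nat) : pred nat :=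
  fun s => S s && ((s < x) || ~~ S (s - x)).

Definition has_card (A : pred nat) (n : nat) : Prop :=
  exists2 l : seq nat, uniq l /\ (forall s, (s \in l) = A s) & size l = n.

(* For any S with finite complement and any x, counting S on an initial segment
   [0, N + x) in two ways (split into Ap(S, x) and the s with s - x in S, or
   directly) gives |Ap(S, x)| = x + #{t in S | t + x notin S}.  For an Arf
   semigroup and d = d_i < d_(i-1), the t in S with t + d notin S are exactly
   rho_1, ..., rho_(i-1): for k > i, rho_k + d = rho_k + rho_(i+1) - rho_i is in
   S by the Arf property, while for k < i, rho_k + d = rho_j would put
   rho_(i-1) + rho_j - rho_k = rho_(i-1) + d in S, strictly between rho_(i-1)
   and rho_i. *)

From mathcomp Require Import all_boot zify.

Set Implicit Arguments.
Unset Strict Implicit.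
Unset Printing Implicit Defensive.

Lemma count_andb_split (a b : pred nat) (s : seq nat) :
  count a s = count (fun y => a y && b y) s + count (fun y => a y && ~~ b y) s.
Proof. by elim: s => //= y s ->; case: (a y) (b y) => [] [] /=; lia. Qed.

Lemma count_iota_uniq (l : seq nat) (b : nat) :
  uniq l -> (forall t, t \in l -> t < b) -> count (mem l) (iota 0 b) = size l.
Proof.
move=> l_uniq l_lt; rewrite -size_filter; apply/perm_size/uniq_perm => //.
  by rewrite filter_uniq ?iota_uniq.
by move=> t; rewrite mem_filter mem_iota /=; case: (boolP (t \in l)) => // /l_lt.
Qed.

Lemma has_card_count (A : pred nat) (b : nat) :
  (forall s, A s -> s < b) -> has_card A (count A (iota 0 b)).
Proof.
move=> A_lt; exists (filter A (iota 0 b)); last by rewrite size_filter.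
split; first by rewrite filter_uniq ?iota_uniq.
by move=> s; rewrite mem_filter mem_iota /=; case: (boolP (A s)) => // /A_lt ->.
Qed.

Section AperyCount.

Variables (S : pred nat) (x N : nat).
Hypothesis S_cofinite : forall n, N <= n -> S n.

Lemma Ap_lt s : Ap S x s -> s < N + x.
Proof.
case/andP=> _ /orP[/ltn_addl // | ]; apply: contraR; rewrite -leqNgt => Ns.
by rewrite S_cofinite //; lia.
Qed.

Lemma count_Ap :
  count (Ap S x) (iota 0 (N + x)) = x + count (fun t => S t && ~~ S (t + x)) (iota 0 N).
Proof.
have count_S_tail : count S (iota 0 (N + x)) = count S (iota 0 N) + x.
  rewrite iotaD count_cat add0n (@eq_in_count _ _ predT (iota N x)) ?count_predT ?size_iota //.
  by move=> n; rewrite mem_iota => /andP[Nn _]; apply: S_cofinite.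
have count_S_Ap : count S (iota 0 (N + x)) =
    count (Ap S x) (iota 0 (N + x)) + count (fun t => S t && S (t + x)) (iota 0 N).
  rewrite (count_andb_split _ (fun y => (y < x) || ~~ S (y - x))); congr (_ + _).
  rewrite addnC iotaD add0n count_cat (@eq_in_count _ _ pred0 (iota 0 x)); last first.
    by move=> y; rewrite mem_iota /= => ->; rewrite andbF.
  rewrite count_pred0 -[x]addn0 iotaDl count_map addn0.
  by apply: eq_count => t /=; rewrite ltnNge leq_addr /= addKn negbK addnC andbC.
have /= := count_andb_split S (fun t => S (t + x)) (iota 0 N).
by lia.
Qed.

Lemma has_card_Ap (l : seq nat) :
  uniq l -> (forall t, (t \in l) = S t && ~~ S (t + x)) ->
  has_card (Ap S x) (x + size l).
Proof.
move=> l_uniq l_def.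
have l_lt t : t \in l -> t < N.
  rewrite l_def => /andP[_]; apply: contraR; rewrite -leqNgt => Nt.
  by rewrite S_cofinite // (leq_trans Nt) ?leq_addr.
rewrite -(count_iota_uniq l_uniq l_lt) (eq_count l_def) -count_Ap.
exact: has_card_count Ap_lt.
Qed.

End AperyCount.

Section Enumeration.

Variables (S : pred nat) (rho : nat -> nat).
Hypothesis rho_enum : increasing_enum S rho.

Let rho_in k : 1 <= k -> S (rho k).
Proof. by case: rho_enum => + _ _; apply. Qed.

Let rho_onto s : S s -> exists2 k, 1 <= k & rho k = s.
Proof. by case: rho_enum => _ _; apply. Qed.

Lemma rho_ltn a b : 1 <= a -> a < b -> rho a < rho b.
Proof.
case: rho_enum => _ rho_ltSn _ a1; elim: b => // b IHb.
rewrite ltnS leq_eqVlt => /orP[/eqP <- | ab]; first exact: rho_ltSn.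
by rewrite (ltn_trans (IHb ab)) ?rho_ltSn ?(leq_trans a1 (ltnW ab)).
Qed.

Lemma rho_leq a b : 1 <= a -> 1 <= b -> (rho a <= rho b) = (a <= b).
Proof.
move=> a1 b1; case: (ltngtP a b) => [ab | ba | ->]; rewrite ?leqnn //.
  by rewrite ltnW ?rho_ltn.
by apply/negbTE; rewrite -ltnNge rho_ltn.
Qed.

Lemma rho_ltE a b : 1 <= a -> 1 <= b -> (rho a < rho b) = (a < b).
Proof. by move=> a1 b1; rewrite !ltnNge rho_leq. Qed.

Lemma notin_rho_gap k s : 1 <= k -> rho k < s < rho k.+1 -> ~~ S s.
Proof.
move=> k1 /andP[lt_ks lt_sk]; apply/negP => /rho_onto [j j1 rho_j].
move: lt_ks lt_sk; rewrite -rho_j !rho_ltE //; lia.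
Qed.

Lemma mem_rho_prefix n t :
  (t \in [seq rho k | k <- iota 1 n]) = S t && (t < rho n.+1).
Proof.
apply/mapP/andP => [[k] | [/rho_onto [k k1 <-]]].
  by rewrite mem_iota => /andP[k1 kn] ->; rewrite rho_in // rho_ltn.
by rewrite rho_ltE // => kn; exists k; rewrite // mem_iota k1 add1n.
Qed.

Lemma uniq_rho_prefix n : uniq [seq rho k | k <- iota 1 n].
Proof.
rewrite map_inj_in_uniq ?iota_uniq // => a b.
rewrite !mem_iota => /andP[a1 _] /andP[b1 _] eq_ab.
by apply/eqP; rewrite eqn_leq -(rho_leq a1 b1) -(rho_leq b1 a1) eq_ab leqnn.
Qed.

Section ArfStep.

Hypothesis rho_Arf : Arf S rho.
Variable i : nat.
Hypothesis i_gt0 : 0 < i.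
Let d := rho i.+1 - rho i.
Hypothesis diff_drop : d < rho i - rho i.-1.

Lemma rho_add_diff_notin k : 1 <= k -> k < i -> ~~ S (rho k + d).
Proof.
move=> k1 ki; have i1 : 1 <= i.-1 by lia.
have d_gt0 : 0 < d by have := rho_ltn i_gt0 (ltnSn i); rewrite /d; lia.
apply/negP => /rho_onto [j j1 rho_j].
have kj : k < j by rewrite -(rho_ltE k1 j1) rho_j; lia.
have rho_k_le : rho k <= rho i.-1 by rewrite rho_leq //; lia.
have ji : j <= i.-1 by rewrite -ltnS prednK // -(rho_ltE j1 i_gt0) rho_j; lia.
have Arf_ijk := rho_Arf k1 (ltnW kj) ji.
apply/negP: Arf_ijk; apply: notin_rho_gap i1 _.
by rewrite prednK // rho_j; lia.
Qed.

Lemma rho_add_diff_in k : i <= k -> S (rho k + d).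
Proof.
have rho_i_le : rho i <= rho i.+1 by exact/ltnW/rho_ltn.
case: (ltngtP i k) => // [ik | <-] _.
  by have := rho_Arf i_gt0 (leqnSn i) ik; rewrite /d addnBA.
by rewrite /d subnKC // rho_in.
Qed.

Lemma add_diff_notinE t : S t -> ~~ S (t + d) = (t < rho i).
Proof.
case/rho_onto => k k1 <-; case: (ltnP k i) => ki.
  by rewrite rho_add_diff_notin // rho_ltn.
by rewrite rho_add_diff_in // ltnNge rho_leq // ki.
Qed.

End ArfStep.

End Enumeration.

Theorem corollary3p4 (S : pred nat) (rho : nat -> nat) (i : nat) :
  numerical_semigroup S ->
  increasing_enum S rho ->
  Arf S rho ->
  2 <= i ->
  rho i.+1 - rho i < rho i - rho i.-1 ->
  has_card (Ap S (rho i.+1 - rho i)) (i - 1 + (rho i.+1 - rho i)).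
Proof.
move=> [_ _ [N S_cofinite]] rho_enum rho_Arf i_ge2 diff_drop.
have i_gt0 : 0 < i by exact: ltnW.
have prefix_def t : (t \in [seq rho k | k <- iota 1 i.-1]) =
    S t && ~~ S (t + (rho i.+1 - rho i)).
  rewrite (mem_rho_prefix rho_enum) prednK //.
  by case St: (S t); rewrite //= (add_diff_notinE rho_enum rho_Arf).
have := has_card_Ap S_cofinite (uniq_rho_prefix rho_enum i.-1) prefix_def.
by rewrite size_map size_iota addnC subn1.
Qed.
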